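(* Let $\mathcal{N}$ be a quantum channel and let $\sigma$ be an optimal mixed state for $\mathcal{N}$. Let $\rho$ be a pure state and $\rho(\varepsilon)=\rho+\sum_{i\ge1}\varepsilon^iA^{(i)}$ a perturbative expansion of $\rho$, and let $f(\varepsilon)=I_c(\rho(\varepsilon),\mathcal{N})-I_c(\rho,\mathcal{N})$. Suppose $\varepsilon$ with $|\varepsilon|<r$ is such that $\sigma-r'\cdot\rho(\varepsilon)$ is positive semidefinite for some $r'>0$ and $f(\varepsilon)<0$. Then $P^{(1)}(\mathcal{N})>Q^{(1)}(\mathcal{N})$.
   Context: All Hilbert spaces are finite-dimensional; a quantum channel is a completely positive trace-preserving map. For a Stinespring isometry $V$ with $\mathcal{N}(\omega)=\mathrm{Tr}_E(V\omega V^\dagger)$, the complementary channel is $\mathcal{N}^c(\omega)=\mathrm{Tr}_B(V\omega V^\dagger)$. Coherent information: $I_c(\omega,\mathcal{N})=S(\mathcal{N}(\omega))-S(\mathcal{N}^c(\omega))$, $S$ the von Neumann entropy. One-shot quantum capacity: $Q^{(1)}(\mathcal{N})=\max_\omega I_c(\omega,\mathcal{N})$; $\sigma$ is optimal if $I_c(\sigma,\mathcal{N})=Q^{(1)}(\mathcal{N})$. For a finite ensemble $\{p_i,\rho_i\}$ (probabilities $p_i$, states $\rho_i$) with average $\bar\rho=\sum_ip_i\rho_i$, the private information is $I_p(\{p_i,\rho_i\},\mathcal{N})=I_c(\bar\rho,\mathcal{N})-\sum_ip_iI_c(\rho_i,\mathcal{N})$, and the one-shot private capacity is $P^{(1)}(\mathcal{N})=\max_{\{p_i,\rho_i\}}I_p(\{p_i,\rho_i\},\mathcal{N})$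 over all ensembles. A perturbative expansion of $\rho$ is a series $\rho(\varepsilon)=\rho+\sum_{i\ge1}\varepsilon^iA^{(i)}$ with each $A^{(i)}$ traceless Hermitian, such that for some $r>0$ the series converges and $\rho(\varepsilon)$ is a density operator for all $\varepsilon\in(-r,r)$. *)

From HB Require Import structures.
From mathcomp Require Import all_boot all_order all_algebra.
From mathcomp Require Import sesquilinear spectral.
From mathcomp Require Import complex.
From mathcomp Require Import all_classical all_reals all_analysis.

Set Implicit Arguments.
Unset Strict Implicit.
Unset Printing Implicit Defensive.

Import Order.TTheory GRing.Theory Num.Theory numFieldNormedType.Exports.
Local Open Scope ring_scope.

Section Quantum.
Variable R : realType.
Local Notation C := (R[i]).

Definition adj m n (A : 'M[C]_(m, n)) : 'M[C]_(n, m) := map_mx Num.conj (A ^T).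

(* positive semidefinite: hermitian and <v|A|v> >= 0 for all v
   (in the order of C, 0 <= z means z real and nonnegative) *)
Definition psd n (A : 'M[C]_n) : Prop :=
  adj A = A /\ forall v : 'cV[C]_n, 0 <= (adj v *m A *m v) 0 0.

Definition density n (rho : 'M[C]_n) : Prop := psd rho /\ \tr rho = 1.

Definition pure n (rho : 'M[C]_n) : Prop := density rho /\ rho *m rho = rho.

Definition negxlnx (x : R) : R := if x == 0 then 0 else - (x * ln x).

(* von Neumann entropy: sum over the eigenvalues (spectral decomposition of
   the normal matrix rho, from mathcomp's spectral theorem) *)
Definition vN_entropy n (rho : 'M[C]_n) : R :=
  \sum_(i < n) negxlnx (complex.Re (spectral_diag rho 0 i)).

(* tensor product H_B (x) H_E indexed by 'I_(dB * dE) via mxvec_index *)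
Definition ptraceE dB dE (X : 'M[C]_(dB * dE)) : 'M[C]_dB :=
  \matrix_(i, j) \sum_(e < dE) X (mxvec_index i e) (mxvec_index j e).
Definition ptraceB dB dE (X : 'M[C]_(dB * dE)) : 'M[C]_dE :=
  \matrix_(i, j) \sum_(b < dB) X (mxvec_index b i) (mxvec_index b j).

Definition stinespring_isometry dA dB dE (V : 'M[C]_(dB * dE, dA)) : Prop :=
  adj V *m V = 1%:M.

Definition chan dA dB dE (V : 'M[C]_(dB * dE, dA)) (w : 'M[C]_dA) : 'M[C]_dB :=
  ptraceE (V *m w *m adj V).
Definition chanc dA dB dE (V : 'M[C]_(dB * dE, dA)) (w : 'M[C]_dA) : 'M[C]_dE :=
  ptraceB (V *m w *m adj V).

Definition Ic dA dB dE (V : 'M[C]_(dB * dE, dA)) (w : 'M[C]_dA) : R :=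
  vN_entropy (chan V w) - vN_entropy (chanc V w).

Definition Q1 dA dB dE (V : 'M[C]_(dB * dE, dA)) : \bar R :=
  ereal_sup [set (Ic V w)%:E | w in [set w | density w]].

Definition optimal dA dB dE (V : 'M[C]_(dB * dE, dA)) (s : 'M[C]_dA) : Prop :=
  density s /\ (Ic V s)%:E = Q1 V.

Definition ensemble dA k (p : 'I_k -> R) (st : 'I_k -> 'M[C]_dA) : Prop :=
  (forall i, 0 <= p i) /\ \sum_(i < k) p i = 1 /\ (forall i, density (st i)).

Definition avg dA k (p : 'I_k -> R) (st : 'I_k -> 'M[C]_dA) : 'M[C]_dA :=
  \sum_(i < k) ((p i)%:C)%C *: st i.

Definition Ip dA dB dE (V : 'M[C]_(dB * dE, dA)) k (p : 'I_k -> R)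
  (st : 'I_k -> 'M[C]_dA) : R :=
  Ic V (avg p st) - \sum_(i < k) p i * Ic V (st i).

Definition P1 dA dB dE (V : 'M[C]_(dB * dE, dA)) : \bar R :=
  ereal_sup [set x | exists k (p : 'I_k -> R) (st : 'I_k -> 'M[C]_dA),
                       ensemble p st /\ x = (Ip V p st)%:E].

Definition pseries (eps : R) (a : nat -> R) : nat -> R :=
  series (fun i => eps ^+ i.+1 * a i.+1).

Definition rho_eps n (rho : 'M[C]_n) (A : nat -> 'M[C]_n) (eps : R) : 'M[C]_n :=
  rho + \matrix_(j, k)
    ((limn (pseries eps (fun i => complex.Re (A i j k))))
      +i* (limn (pseries eps (fun i => complex.Im (A i j k)))))%C.

Definition pert_expansion n (rho : 'M[C]_n) (A : nat -> 'M[C]_n) (r : R) : Prop :=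
  0 < r /\
  (forall i, (0 < i)%N -> \tr (A i) = 0 /\ adj (A i) = A i) /\
  (forall eps : R, - r < eps < r ->
     (forall j k, cvgn (pseries eps (fun i => complex.Re (A i j k))) /\
                  cvgn (pseries eps (fun i => complex.Im (A i j k)))) /\
     density (rho_eps rho A eps)).

End Quantum.

From HB Require Import structures.
From mathcomp Require Import all_boot all_order all_algebra.
From mathcomp Require Import sesquilinear spectral.
From mathcomp Require Import complex.
From mathcomp Require Import all_classical all_reals all_analysis.

(* A pure input state yields a pure joint state on B (x) E, whose two marginals
   M M^* and (M^* M)^T have the same nonzero spectrum by Sylvester's identity
   X^n chi(M M^* ) = X^m chi(M^* M); hence I_c vanishes on pure states and
   f(eps) = I_c(rho(eps)).  Diagonalising the positive operator
   sigma - r' rho(eps) = sum_j d_j |u_j><u_j| gives the ensemble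
   {(r', rho(eps))} u {(d_j, |u_j><u_j|)} with average sigma; all its members
   but rho(eps) are pure, so its private information is
   I_c(sigma) - r' f(eps) > I_c(sigma) = Q^(1). *)

Set Implicit Arguments.
Unset Strict Implicit.
Unset Printing Implicit Defensive.

Import Order.TTheory GRing.Theory Num.Theory.
Local Open Scope ring_scope.

Section CharPoly.
Variable F : comNzRingType.

Lemma char_poly_mulmxC m n (A : 'M[F]_(m, n)) (B : 'M[F]_(n, m)) :
  'X^n * char_poly (A *m B) = 'X^m * char_poly (B *m A).
Proof.
pose A' := map_mx polyC A; pose B' := map_mx polyC B.
pose M := block_mx (scalar_mx 'X : 'M[{poly F}]_m) A'
                   ('X *: B') (scalar_mx 'X : 'M[{poly F}]_n).
have M_lower : M = block_mx 1%:M 0 B' 1%:M *m block_mx 'X%:M A' 0 ('X%:M - B' *m A').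
  by rewrite mulmx_block !mul1mx !mul0mx ?mulmx0 !addr0 ?add0r mul_mx_scalar addrC subrK.
have M_upper : M = block_mx ('X%:M - A' *m B') A' 0 'X%:M *m block_mx 1%:M 0 B' 1%:M.
  by rewrite mulmx_block !mulmx1 ?mulmx0 ?mul0mx ?addr0 ?add0r subrK mul_scalar_mx.
have := congr1 determinant M_upper; rewrite {1}M_lower.
rewrite !det_mulmx !det_lblock !det_ublock !det1 !det_scalar mul1r mulr1 !mul1r.
by rewrite /char_poly /char_poly_mx !map_mxM -/A' -/B' mulrC => ->; rewrite mulrC.
Qed.

Lemma char_poly_trmx n (A : 'M[F]_n) : char_poly A^T = char_poly A.
Proof.
rewrite /char_poly -det_tr; congr determinant.
by apply/matrixP => i j; rewrite !mxE eq_sym.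
Qed.

Lemma char_poly_diag n (d : 'rV[F]_n) :
  char_poly (diag_mx d) = \prod_(i < n) ('X - (d 0 i)%:P).
Proof.
rewrite char_poly_trig ?diag_mx_is_trig //.
by apply: eq_bigr => i _; rewrite mxE eqxx mulr1n.
Qed.

Lemma polyXn_prod_XsubC0 k : 'X^k = \prod_(x <- nseq k (0 : F)) ('X - x%:P).
Proof.
elim: k => [|k IHk]; first by rewrite expr0 big_nil.
by rewrite exprS IHk big_cons subr0.
Qed.

End CharPoly.

Lemma char_poly_similar (F : fieldType) n (P D : 'M[F]_n) : P \in unitmx ->
  char_poly (invmx P *m D *m P) = char_poly D.
Proof.
move=> P_unit; rewrite /char_poly /char_poly_mx.
have -> : 'X%:M - map_mx polyC (invmx P *m D *m P) =
          map_mx polyC (invmx P) *m ('X%:M - map_mx polyC D) *m map_mx polyC P.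
  rewrite mulmxBr mulmxBl !map_mxM; congr (_ - _).
  by rewrite mul_mx_scalar -scalemxAl -map_mxM mulVmx // map_mx1 scalemx1.
by rewrite !det_mulmx mulrC mulrA -det_mulmx -map_mxM mulmxV // map_mx1 det1 mul1r.
Qed.

Section Quantum.
Variable R : realType.
Local Notation C := R[i].

Lemma adj_mul m n p (A : 'M[C]_(m, n)) (B : 'M[C]_(n, p)) :
  adj (A *m B) = adj B *m adj A.
Proof. by rewrite /adj trmx_mul map_mxM. Qed.

Lemma adjK m n (A : 'M[C]_(m, n)) : adj (adj A) = A.
Proof. exact: trmxCK. Qed.

Lemma adj_trmx m n (A : 'M[C]_(m, n)) : adj A^T = (adj A)^T.
Proof. by rewrite /adj map_trmx. Qed.

Lemma selfadj_normalmx n (H : 'M[C]_n) : adj H = H -> H \is normalmx.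
Proof. by move=> HH; apply/normalmxP; rewrite -[(H ^t* )%sesqui]/(adj H) HH. Qed.

Definition spectrum n (H : 'M[C]_n) := [seq spectral_diag H 0 i | i <- enum 'I_n].

Lemma char_poly_spectrum n (H : 'M[C]_n) : H \is normalmx ->
  char_poly H = \prod_(x <- spectrum H) ('X - x%:P).
Proof.
move=> /orthomx_spectralP {1}->.
by rewrite char_poly_similar ?spectral_unit // char_poly_diag big_map big_enum.
Qed.

Lemma vN_entropy_spectrum n (H : 'M[C]_n) :
  vN_entropy H = \sum_(x <- spectrum H) negxlnx (complex.Re x).
Proof. by rewrite /vN_entropy big_map big_enum. Qed.

(* Only the nonzero eigenvalues matter, because 0 ln 0 = 0. *)
Lemma vN_entropy_char_poly m n (H1 : 'M[C]_m) (H2 : 'M[C]_n) :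
  H1 \is normalmx -> H2 \is normalmx ->
  'X^n * char_poly H1 = 'X^m * char_poly H2 -> vN_entropy H1 = vN_entropy H2.
Proof.
move=> H1_normal H2_normal; rewrite !char_poly_spectrum // !polyXn_prod_XsubC0.
rewrite -!big_cat => /prod_XsubC_eq spectra_perm.
have zeros k : \sum_(x <- nseq k (0 : C)) negxlnx (complex.Re x) = 0.
  by rewrite big_nseq /negxlnx eqxx iter_addr_0 mul0rn.
have : \sum_(x <- nseq n 0 ++ spectrum H1) negxlnx (complex.Re x) =
       \sum_(x <- nseq m 0 ++ spectrum H2) negxlnx (complex.Re x).
  exact: perm_big.
by rewrite !big_cat /= !zeros !add0r -!vN_entropy_spectrum.
Qed.

(* Reshape v into the dB x dE matrix M: the marginals are M M^* and (M^* M)^T. *)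
Lemma vN_entropy_ptrace_pure dB dE (v : 'cV[C]_(dB * dE)) :
  vN_entropy (ptraceE (v *m adj v)) = vN_entropy (ptraceB (v *m adj v)).
Proof.
pose M := \matrix_(b < dB, e < dE) v (mxvec_index b e) 0.
have -> : ptraceE (v *m adj v) = M *m adj M.
  apply/matrixP => i j; rewrite !mxE; apply: eq_bigr => e _.
  by rewrite !mxE big_ord1 !mxE.
have -> : ptraceB (v *m adj v) = (adj M *m M)^T.
  apply/matrixP => i j; rewrite !mxE; apply: eq_bigr => b _.
  by rewrite !mxE big_ord1 !mxE mulrC.
apply: vN_entropy_char_poly.
- by apply: selfadj_normalmx; rewrite adj_mul adjK.
- by apply: selfadj_normalmx; rewrite adj_trmx adj_mul adjK.
- by rewrite char_poly_trmx char_poly_mulmxC.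
Qed.

Lemma Ic_rank1 dA dB dE (V : 'M[C]_(dB * dE, dA)) (u : 'cV[C]_dA) :
  Ic V (u *m adj u) = 0.
Proof.
rewrite /Ic /chan /chanc.
have -> : V *m (u *m adj u) *m adj V = (V *m u) *m adj (V *m u).
  by rewrite adj_mul !mulmxA.
by rewrite vN_entropy_ptrace_pure subrr.
Qed.

Lemma rank1_density n (u : 'cV[C]_n) : adj u *m u = 1%:M -> density (u *m adj u).
Proof.
move=> u_unit; split; last by rewrite mxtrace_mulC u_unit mxtrace1.
split=> [|w]; first by rewrite adj_mul adjK.
have -> : adj w *m (u *m adj u) *m w = (adj w *m u) *m adj (adj w *m u).
  by rewrite adj_mul adjK !mulmxA.
by rewrite mxE big_ord1 !mxE ord1 mul_conjC_ge0.
Qed.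

Definition orthonormal_family n (u : 'I_n -> 'cV[C]_n) :=
  forall i j, adj (u i) *m u j = (i == j)%:R%:M.

Definition rank1_sum n (d : 'I_n -> C) (u : 'I_n -> 'cV[C]_n) : 'M[C]_n :=
  \sum_i d i *: (u i *m adj (u i)).

Section RankOneSum.
Variables (n : nat) (d : 'I_n -> C) (u : 'I_n -> 'cV[C]_n).
Hypothesis u_orthonormal : orthonormal_family u.

Lemma rank1_sum_eigen k : rank1_sum d u *m u k = d k *: u k.
Proof.
rewrite /rank1_sum mulmx_suml (bigD1 k) //= big1 ?addr0 => [|i ik].
  by rewrite -scalemxAl -mulmxA u_orthonormal eqxx mulmx1.
by rewrite -scalemxAl -mulmxA u_orthonormal (negbTE ik) mul_mx_scalar !scale0r scaler0.
Qed.

Lemma rank1_sum_form k : adj (u k) *m rank1_sum d u *m u k = (d k)%:M.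
Proof.
by rewrite -mulmxA rank1_sum_eigen -scalemxAr u_orthonormal eqxx scale_scalar_mx mulr1.
Qed.

Lemma mxtrace_rank1_sum : \tr (rank1_sum d u) = \sum_i d i.
Proof.
rewrite raddf_sum; apply: eq_bigr => i _.
by rewrite /= mxtraceZ mxtrace_mulC u_orthonormal eqxx mxtrace1 mulr1.
Qed.

End RankOneSum.

Lemma selfadj_rank1_sum n (T : 'M[C]_n) : adj T = T ->
  exists d u, T = rank1_sum d u /\ orthonormal_family u.
Proof.
move=> /selfadj_normalmx /orthomx_spectralP TE.
set P := spectralmx T in TE; set D := spectral_diag T in TE.
have P_unitary : P \is unitarymx by exact: spectral_unitarymx.
have PPadj : P *m adj P = 1%:M by apply/unitarymxP.
rewrite invmx_unitary // in TE.
exists (fun i => D 0 i), (fun i => adj (row i P)); split.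
  rewrite {1}TE; apply/matrixP => a b; rewrite summxE mul_mx_diag !mxE.
  apply: eq_bigr => i _; rewrite !mxE big_ord1 !mxE.
  by rewrite conjCK mulrA [_ * D 0 i]mulrC.
move=> i j; rewrite adjK; apply/matrixP => a b.
rewrite !ord1 !mxE; have := congr1 (fun M : 'M[C]_n => M i j) PPadj.
by rewrite !mxE => <-; apply: eq_bigr => k _; rewrite !mxE.
Qed.

Lemma psd_rank1_sum n (T : 'M[C]_n) : psd T ->
  exists (d : 'I_n -> R) u,
    [/\ T = rank1_sum (fun i => (d i)%:C%C) u, orthonormal_family u
      & forall i, 0 <= d i].
Proof.
case=> /selfadj_rank1_sum [d [u [TE u_orthonormal]]] T_form.
have d_ge0 i : 0 <= d i.
  by have := T_form (u i); rewrite TE rank1_sum_form // mxE eqxx mulr1n.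
exists (fun i => complex.Re (d i)), u; split => // [|i].
  rewrite TE; apply: eq_bigr => i _; congr (_ *: _).
  by move: (d_ge0 i); case: (d i) => a b; rewrite lecE /= => /andP[/eqP-> _].
by move: (d_ge0 i); case: (d i) => a b; rewrite lecE => /andP[].
Qed.

Lemma pure_rank1 n (rho : 'M[C]_n) : pure rho -> exists u : 'cV[C]_n, rho = u *m adj u.
Proof.
case=> [[rho_psd rho_tr] rho_idem]; have [d [u [TE u_on d_ge0]]] := psd_rank1_sum rho_psd.
pose c i := (d i)%:C%C.
have c_idem k : c k * c k = c k.
  have := rank1_sum_form c u_on k; rewrite -TE -{1}rho_idem -mulmxA -(mulmxA rho).
  rewrite TE rank1_sum_eigen // -!scalemxAr mulmxA rank1_sum_form // scale_scalar_mx.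
  by move/matrixP/(_ 0 0); rewrite !mxE eqxx !mulr1n.
have c_sum : \sum_i c i = 1 by rewrite -(mxtrace_rank1_sum c u_on) -TE.
have [j cj | c0] := pickP (fun j => c j != 0); last first.
  by move: c_sum; rewrite big1 => [/eqP|i _]; [rewrite eq_sym oner_eq0 | apply/eqP/negbFE/c0].
have cj1 : c j = 1 by apply: (mulfI cj); rewrite c_idem mulr1.
have c_off : \sum_(i | i != j) c i = 0.
  by apply: (@addrI _ 1); move: c_sum; rewrite addr0 (bigD1 j) //= cj1.
have c_ge0 i : 0 <= c i by rewrite ler0c.
have c_off0 := psumr_eq0P (fun i _ => c_ge0 i) c_off.
exists (u j); rewrite TE /rank1_sum (bigD1 j) //= big1 ?addr0 => [|i ij].
  by rewrite -/(c j) cj1 scale1r.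
by rewrite -/(c i) c_off0 // scale0r.
Qed.

Lemma Ic_pure dA dB dE (V : 'M[C]_(dB * dE, dA)) rho : pure rho -> Ic V rho = 0.
Proof. by move=> /pure_rank1 [u ->]; exact: Ic_rank1. Qed.

Lemma psd_sub_ensemble dA dB dE (V : 'M[C]_(dB * dE, dA)) (sigma tau : 'M[C]_dA)
    (s : R) :
  density sigma -> density tau -> 0 <= s -> psd (sigma - s%:C%C *: tau) ->
  exists k (p : 'I_k -> R) st, ensemble p st /\ Ip V p st = Ic V sigma - s * Ic V tau.
Proof.
move=> [_ sigma_tr] tau_density s_ge0 /psd_rank1_sum [d [u [TE u_on d_ge0]]].
pose p (i : 'I_dA.+1) := if unlift ord0 i is Some j then d j else s.
pose st (i : 'I_dA.+1) := if unlift ord0 i is Some j then u j *m adj (u j) else tau.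
have d_sum : \sum_j (d j)%:C%C = 1 - s%:C%C.
  rewrite -(mxtrace_rank1_sum _ u_on) -TE raddfB /= mxtraceZ sigma_tr.
  by case: tau_density => _ ->; rewrite mulr1.
have avg_sigma : avg p st = sigma.
  rewrite /avg big_ord_recl /p /st unlift_none.
  under eq_bigr => j _ do rewrite liftK.
  by rewrite -/(rank1_sum _ u) -TE addrC subrK.
exists dA.+1, p, st; split; first split; [|split|].
- by move=> i; rewrite /p; case: unlift.
- rewrite big_ord_recl /p unlift_none; under eq_bigr => j _ do rewrite liftK.
  by apply: (@complexI R); rewrite rmorphD rmorph_sum /= d_sum addrC subrK.
- move=> i; rewrite /st; case: unlift => [j|] //.
  by apply: rank1_density; rewrite u_on eqxx.
- rewrite /Ip avg_sigma big_ord_recl /p /st unlift_none big1 ?addr0 // => j _.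
  by rewrite liftK Ic_rank1 mulr0.
Qed.

Lemma Ip_le_P1 dA dB dE (V : 'M[C]_(dB * dE, dA)) k (p : 'I_k -> R) st :
  ensemble p st -> ((Ip V p st)%:E <= P1 V)%E.
Proof. by move=> ens; apply: ereal_sup_ubound; exists k, p, st. Qed.

End Quantum.

Unset Implicit Arguments.

Theorem proposition2 (R : realType) (dA dB dE : nat)
  (V : 'M[R[i]]_(dB * dE, dA)) (sigma rho : 'M[R[i]]_dA)
  (A : nat -> 'M[R[i]]_dA) (r eps r' : R) :
  stinespring_isometry V ->
  optimal V sigma ->
  pure rho ->
  pert_expansion rho A r ->
  `|eps| < r ->
  0 < r' ->
  psd (sigma - (r'%:C)%C *: rho_eps rho A eps) ->
  Ic V (rho_eps rho A eps) - Ic V rho < 0 ->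
  (Q1 V < P1 V)%E.
Proof.
move=> _ [sigma_density Q1_sigma] rho_pure [_ [_ expansion]] eps_lt r'_gt0 psd_diff.
have eps_in : - r < eps < r by rewrite -ltr_norml.
have [_ rho_eps_density] := expansion eps eps_in.
rewrite (Ic_pure V rho_pure) subr0 => f_lt0.
have [k [p [st [ens Ip_eq]]]] :=
  psd_sub_ensemble V sigma_density rho_eps_density (ltW r'_gt0) psd_diff.
rewrite -Q1_sigma; apply: (@lt_le_trans _ _ (Ip V p st)%:E); last exact: Ip_le_P1.
by rewrite lte_fin Ip_eq ltrDl oppr_gt0 pmulr_rlt0.
Qed.
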